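(* Let $t\in[0,1]$. For every $\eta\in(0,1)$ there exists a constant $c_\eta>0$ depending only on $\eta$ such that for any $n,p$ and any fixed design $\boldsymbol{X}\in\mathbb{R}^{n\times p}$, $$\mathcal{R}_{1+t,\boldsymbol{X}}\bigl(c_\eta n^{-t/(1+t)}\bigr)\ge 1-\eta.$$
   Context: Data: $\boldsymbol{Z}=\boldsymbol{X}\beta^Z+\boldsymbol{e}$ and $\boldsymbol{Y}=\boldsymbol{X}\beta+b\boldsymbol{Z}+\boldsymbol{\varepsilon}$ with $\beta,\beta^Z\in\mathbb{R}^p$, $b\in\mathbb{R}$, where $\varepsilon_1,\ldots,\varepsilon_n$ are i.i.d. from $\mathbb{P}_\varepsilon$ with mean $0$, $e_1,\ldots,e_n$ are i.i.d. from $\mathbb{P}_e$ with mean $0$, and $\boldsymbol\varepsilon$ is independent of $\boldsymbol e$. For $s>0$, $\mathcal{D}_s$ is the class of distributions of a random variable $\xi$ with $\mathbb{E}[\xi]=0$ and $1\le\mathbb{E}[|\xi|^s]\le2$; $\tilde{\mathcal{D}}$ is the class of distributions with $\mathbb{P}(|\xi|>1/2)>1/2$. $\mathbb{P}_{b}$ denotes the law of the data with coefficient $b$ (for given $\boldsymbol X,\beta,\beta^Z,\mathbb{P}_\varepsilon,\mathbb{P}_e$). With $\Phi$ the class of measurable functions of $(\boldsymbol{X},\boldsymbol{Z},\boldsymbol{Y})$ with values in $\{0,1\}$, the minimax testing risk is $$\mathcal{R}_{s,\boldsymbol{X}}(\tau):=\inf_{\varphi\in\Phi}\Bigl\{\sup_{\mathbb{P}_\varepsilon\in\mathcal{D}_s}\sup_{\mathbb{P}_e\in\mathcal{D}_1\cap\tilde{\mathcal{D}}}\sup_{\beta,\beta^Z\in\mathbb{R}^p}\mathbb{P}_0(\varphi=1)+\sup_{|b|\ge\tau}\sup_{\mathbb{P}_\varepsilon\in\mathcal{D}_s}\sup_{\mathbb{P}_e\in\mathcal{D}_1\cap\tilde{\mathcal{D}}}\sup_{\beta,\beta^Z\in\mathbb{R}^p}\mathbb{P}_b(\varphi=0)\Bigr\}.$$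 *)

From HB Require Import structures.
From mathcomp Require Import all_boot all_order all_algebra.
From mathcomp Require Import all_classical all_reals all_analysis.
Set Implicit Arguments. Unset Strict Implicit. Unset Printing Implicit Defensive.
Import Order.TTheory GRing.Theory Num.Theory.
Local Open Scope classical_set_scope.
Local Open Scope ring_scope.

Section defs.
Variable R : realType.

(* Expectation with respect to the n-fold product measure mu^{(x) n} of a
   nonnegative function on n.-tuples, written as the iterated integral
   (Tonelli).  iint mu n f = \int f d(mu^{(x) n}). *)
Fixpoint iint (mu : probability R R) (n : nat)
  : (n.-tuple R -> \bar R) -> \bar R :=
  match n return (n.-tuple R -> \bar R) -> \bar R with
  | 0 => fun f => f [tuple]
  | m.+1 => fun f => (\int[mu]_x iint mu (fun t : m.-tuple R => f [tuple of x :: t]))%E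
  end.

Definition Dclass (s : R) (P : probability R R) : Prop :=
  P.-integrable setT (fun x : R => x%:E) /\
  (\int[P]_x x%:E = 0)%E /\
  (1 <= \int[P]_x (powR `|x| s)%:E <= 2%:E)%E.

Definition Dtilde (P : probability R R) : Prop :=
  ((1 / 2)%:E < P [set x : R | (1 / 2 < `|x|)%R])%E.

Definition dataZ n p (X : 'M[R]_(n, p)) (betaZ : 'cV[R]_p) (e : n.-tuple R)
  : n.-tuple R := [tuple (X *m betaZ) i 0 + tnth e i | i < n].

Definition dataY n p (X : 'M[R]_(n, p)) (beta betaZ : 'cV[R]_p) (b : R)
  (eps e : n.-tuple R) : n.-tuple R :=
  [tuple (X *m beta) i 0 + b * tnth (dataZ X betaZ e) i + tnth eps i | i < n].

Definition law n p (X : 'M[R]_(n, p)) (beta betaZ : 'cV[R]_p) (b : R)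
  (Peps Pe : probability R R) (A : set (n.-tuple R * n.-tuple R)) : \bar R :=
  iint Peps (fun eps : n.-tuple R =>
    iint Pe (fun e : n.-tuple R =>
      (\1_A (dataZ X betaZ e, dataY X beta betaZ b eps e))%:E)).

Definition typeI (s : R) n p (X : 'M[R]_(n, p))
  (A : set (n.-tuple R * n.-tuple R)) : \bar R :=
  ereal_sup [set y | exists (beta betaZ : 'cV[R]_p) (Peps Pe : probability R R),
    [/\ Dclass s Peps, Dclass 1 Pe, Dtilde Pe & y = law X beta betaZ 0 Peps Pe A]].

Definition typeII (s : R) n p (X : 'M[R]_(n, p)) (tau : R)
  (A : set (n.-tuple R * n.-tuple R)) : \bar R :=
  ereal_sup [set y | exists (b : R) (beta betaZ : 'cV[R]_p)
                            (Peps Pe : probability R R),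
    [/\ tau <= `|b|, Dclass s Peps, Dclass 1 Pe, Dtilde Pe &
        y = law X beta betaZ b Peps Pe (~` A)]].

(* Minimax testing risk R_{s,X}(tau): infimum over all measurable tests
   phi : (Z,Y) -> {0,1}, i.e. over measurable rejection regions A. *)
Definition minimax_risk (s : R) n p (X : 'M[R]_(n, p)) (tau : R) : \bar R :=
  ereal_inf [set (typeI s X A + typeII s X tau A)%E | A in
    [set A : set (n.-tuple R * n.-tuple R) | measurable A]].
End defs.

From HB Require Import structures.
From mathcomp Require Import all_boot all_order all_algebra.
From mathcomp Require Import all_classical all_reals all_analysis.
From mathcomp Require Import measurable_realfun lra ring.
Set Implicit Arguments. Unset Strict Implicit. Unset Printing Implicit Defensive.
Import Order.TTheory GRing.Theory Num.Theory.
Local Open Scope classical_set_scope.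
Local Open Scope ring_scope.

(* Take beta = beta^Z = 0, so that Z = e and Y = b e + eps.  Let e be 1 with
   probability 1 - r and -(1 - r)/r with probability r.  Under the null, eps is
   uniform on {1, -1, 3/2, -3/2} with total mass 1 - r and 0 with mass r; under
   the alternative the four outer atoms are shifted by -b and the mass r sits at
   (1 - r) b / r, which keeps the mean zero.  When no coordinate of e or eps
   falls on its rare atom, (Z, Y) is the same under both hypotheses, so every
   test errs with total probability at least 1 - 2 n r.  The rare atom adds
   r ((1 - r) b / r)^(1+t) to the (1+t)-th moment of eps; with r of order eta/n
   this stays bounded exactly when b is of order eta n^(-t/(1+t)). *)

Section integral_nonmeasurable.
Local Open Scope ereal_scope.
Context d (T : measurableType d) (R : realType) (mu : {measure set T -> \bar R}).

(* Unlike [ge0_le_integral], no measurability is needed: the integral of a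
   nonnegative function is the supremum of the simple functions below it. *)
Lemma ge0_le_integralT (f1 f2 : T -> \bar R) : (forall x, 0 <= f1 x) ->
  (forall x, f1 x <= f2 x) -> \int[mu]_x f1 x <= \int[mu]_x f2 x.
Proof.
move=> f10 f12; have f20 x : 0 <= f2 x by exact: le_trans (f12 x).
rewrite !ge0_integralTE//; apply: ereal_sup_le => _ [g gf1 <-].
by exists g => // x; exact: le_trans (gf1 x) (f12 x).
Qed.
End integral_nonmeasurable.

Section countable_domain.
Context (R : realType).

Lemma measurable_fun_countable (D : set R) (f : R -> \bar R) :
  countable D -> measurable_fun D f.
Proof.
move=> cD _ Y _; apply: countable_measurable => [t|].
  exact: measurable_set1.
by apply: sub_countable cD; apply: subset_card_le; exact: subIsetl.
Qed.

Lemma measurable_fun_if_countable (S : set R) (f : R -> \bar R) (c : \bar R) :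
  countable S -> measurable_fun setT (fun y => if y \in S then f y else c).
Proof.
move=> cS; have memS : (fun y => y \in S) @^-1` [set true] = S.
  by apply/seteqP; split => y /=; [move/set_mem|move/mem_set].
have mS : measurable S.
  by apply: countable_measurable => // t; exact: measurable_set1.
apply: measurable_fun_if => //.
- by apply: (measurable_fun_bool true); rewrite setTI memS.
- by rewrite setTI memS; exact: measurable_fun_countable.
Qed.
End countable_domain.

Section discrete_prob.
Context (R : realType) (k : nat) (w a : nat -> R).
Hypotheses (w_ge0 : forall i, 0 <= w i) (w_sum1 : \sum_(i < k) w i = 1).

Let weighted_diracs : {measure set R -> \bar R}^nat :=
  fun i => mscale (NngNum (w_ge0 i)) \d_(a i).

Definition discrete_measure := msum weighted_diracs k.

Let discrete_measure_setT : discrete_measure setT = 1%E.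
Proof.
rewrite /discrete_measure /msum /weighted_diracs /= /mscale /=.
by under eq_bigr do rewrite diracT mule1; rewrite sumEFin w_sum1.
Qed.

HB.instance Definition _ := Measure.on discrete_measure.
HB.instance Definition _ :=
  @Measure_isProbability.Build _ _ R discrete_measure discrete_measure_setT.
Definition discrete_prob : probability R R := discrete_measure.

Lemma discrete_probE (A : set R) :
  discrete_prob A = (\sum_(i < k) (w i)%:E * \d_(a i) A)%E.
Proof. by []. Qed.

Local Open Scope ereal_scope.

Let countable_atoms : countable (a @` `I_k).
Proof. exact/finite_set_countable/finite_image/finite_II. Qed.

Let ge0_integral_discrete_measurable (F : R -> \bar R) : (forall x, 0 <= F x) ->
  measurable_fun setT F ->
  \int[discrete_prob]_x F x = \sum_(i < k) (w i)%:E * F (a i).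
Proof.
move=> F0 mF; rewrite ge0_integral_measure_sum//; apply: eq_bigr => i _.
by rewrite ge0_integral_mscale// integral_dirac// diracT mul1e.
Qed.

(* [F] need not be measurable: it is squeezed between two measurable
   functions that agree with it on the atoms. *)
Lemma ge0_integral_discrete_prob (F : R -> \bar R) : (forall x, 0 <= F x) ->
  \int[discrete_prob]_x F x = \sum_(i < k) (w i)%:E * F (a i).
Proof.
move=> F0; pose squeeze c y := if y \in a @` `I_k then F y else c.
have squeezeE c : \sum_(i < k) (w i)%:E * squeeze c (a i) =
                  \sum_(i < k) (w i)%:E * F (a i).
  apply: eq_bigr => i _; rewrite /squeeze mem_set//.
  by apply: imageP; rewrite /= ltn_ord.
have squeeze_ge0 c x : 0 <= c -> 0 <= squeeze c x by rewrite /squeeze; case: ifP.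
have msqueeze c := measurable_fun_if_countable F c countable_atoms.
apply/eqP; rewrite eq_le; apply/andP; split.
- rewrite -(squeezeE +oo) -ge0_integral_discrete_measurable => [|x|].
  + apply: ge0_le_integralT => // x; rewrite /squeeze; case: ifP => // _.
    exact: leey.
  + exact/squeeze_ge0/leey.
  + exact: msqueeze.
- rewrite -(squeezeE 0) -ge0_integral_discrete_measurable => [|x|].
  + apply: ge0_le_integralT => x; first exact: squeeze_ge0.
    by rewrite /squeeze; case: ifP.
  + exact: squeeze_ge0.
  + exact: msqueeze.
Qed.

Lemma integral_discrete_prob (F : R -> R) :
  \int[discrete_prob]_x (F x)%:E = (\sum_(i < k) w i * F (a i))%:E.
Proof.
have maxBmaxN (x : R) : (Num.max x 0 - Num.max (- x) 0)%R = x.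
  case: (lerP 0 x) => x0.
    by rewrite (max_idPr _) ?subr0 // oppr_le0.
  by rewrite (max_idPl _) ?sub0r ?opprK// oppr_ge0 ltW.
rewrite integralE !ge0_integral_discrete_prob//.
under eq_bigr do rewrite funeposE -EFin_max -EFinM.
under [X in _ - X]eq_bigr do rewrite funenegE -EFinN -EFin_max -EFinM.
rewrite !sumEFin -EFinB -sumrB; congr EFin.
by apply: eq_bigr => i _; rewrite -mulrBr maxBmaxN.
Qed.

Lemma Dclass_discrete_prob (s : R) : (\sum_(i < k) w i * a i = 0)%R ->
  (1 <= \sum_(i < k) w i * `|a i| `^ s <= 2)%R -> Dclass s discrete_prob.
Proof.
move=> mean0 moment; split; [|split].
- apply/integrableP; split; first exact/measurable_EFinP.
  rewrite ge0_integral_discrete_prob//.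
  under eq_bigr do rewrite -EFinM.
  by rewrite sumEFin ltry.
- by rewrite (@integral_discrete_prob id) mean0.
- by rewrite (@integral_discrete_prob (fun x => `|x| `^ s)%R) !lee_fin.
Qed.

End discrete_prob.

Section iterated_weighted_sum.
Context (R : realType) (k : nat) (w : nat -> R).
Hypotheses (w_ge0 : forall i, 0 <= w i) (w_sum1 : \sum_(i < k) w i = 1).

(* [iwsum k w a f] is the mean of [f] under the [n]-fold product of the law
   with mass [w i] at [a i], [i < k]. *)
Fixpoint iwsum (a : nat -> R) (n : nat) : (n.-tuple R -> R) -> R :=
  match n return (n.-tuple R -> R) -> R with
  | 0 => fun f => f [tuple]
  | m.+1 => fun f =>
      \sum_(i < k) w i * iwsum a (fun t : m.-tuple R => f [tuple of a i :: t])
  end.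

Lemma iwsum_ge0 a n (f : n.-tuple R -> R) :
  (forall t, 0 <= f t) -> 0 <= iwsum a f.
Proof.
elim: n f => [|m IH] f f0 /=; first exact: f0.
by apply: sumr_ge0 => i _; rewrite mulr_ge0// IH.
Qed.

Lemma iwsum_le1 a n (f : n.-tuple R -> R) :
  (forall t, f t <= 1) -> iwsum a f <= 1.
Proof.
elim: n f => [|m IH] f f1 /=; first exact: f1.
rewrite -w_sum1; apply: ler_sum => i _.
by rewrite -[leRHS]mulr1 ler_wpM2l// IH.
Qed.

Lemma iwsum_itv a n (f : n.-tuple R -> R) :
  (forall t, 0 <= f t <= 1) -> 0 <= iwsum a f <= 1.
Proof.
move=> f01; rewrite iwsum_ge0 ?iwsum_le1// => t.
- by case/andP: (f01 t).
- by case/andP: (f01 t).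
Qed.

Lemma iwsum_1B a n (f : n.-tuple R -> R) :
  iwsum a (fun t => 1 - f t) = 1 - iwsum a f.
Proof.
elim: n f => [|m IH] f //=.
by under eq_bigr do rewrite IH mulrBr mulr1; rewrite sumrB w_sum1.
Qed.

Variables (a0 a1 : nat -> R) (bad : pred nat).
Let rho := \sum_(i < k | bad i) w i.

(* Couple the two product laws by drawing the same index sequence [J]: they
   differ only when some index of [J] is bad, which has probability at most
   [n * rho]. *)
Lemma iwsum_coupling n (f0 f1 : n.-tuple R -> R) (d : R) : 0 <= d ->
  (forall t, 0 <= f0 t <= 1) -> (forall t, 0 <= f1 t <= 1) ->
  (forall J : n.-tuple nat, all (fun j => (j < k)%N && ~~ bad j) J ->
     `|f0 (map_tuple a0 J) - f1 (map_tuple a1 J)| <= d) ->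
  `|iwsum a0 f0 - iwsum a1 f1| <= n%:R * rho + d.
Proof.
move=> d0; elim: n f0 f1 => [|m IH] f0 f1 f01 f11 H /=.
  by rewrite mul0r add0r; have := H [tuple] isT; congr (`|f0 _ - f1 _| <= d);
    apply: val_inj.
have rho_ge0 : 0 <= rho by apply: sumr_ge0.
pose g i := iwsum a0 (fun t : m.-tuple R => f0 [tuple of a0 i :: t]) -
            iwsum a1 (fun t : m.-tuple R => f1 [tuple of a1 i :: t]).
have g_bad i : `|g i| <= 1.
  have /andP[? ?] :
      0 <= iwsum a0 (fun t : m.-tuple R => f0 [tuple of a0 i :: t]) <= 1.
    by apply: iwsum_itv => t; exact: f01.
  have /andP[? ?] :
      0 <= iwsum a1 (fun t : m.-tuple R => f1 [tuple of a1 i :: t]) <= 1.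
    by apply: iwsum_itv => t; exact: f11.
  by rewrite /g ler_norml; apply/andP; split; lra.
have g_good (i : 'I_k) : ~~ bad i -> `|g i| <= m%:R * rho + d.
  move=> gi; apply: IH => [t|t|J HJ]; [exact: f01|exact: f11|].
  have := H [tuple of (nat_of_ord i) :: J].
  rewrite /= ltn_ord gi HJ => /(_ isT).
  by congr (`|f0 _ - f1 _| <= d); apply: val_inj.
have sum_good : \sum_(i < k | ~~ bad i) w i <= 1.
  by rewrite -w_sum1 [leRHS](bigID (fun i : 'I_k => ~~ bad i)) /= lerDl sumr_ge0.
rewrite -sumrB; under eq_bigr do rewrite -mulrBr -/(g _).
rewrite (bigID (fun i : 'I_k => bad i)) /=.
apply: le_trans (ler_normD _ _) _; rewrite -natr1 mulrDl mul1r addrAC addrC.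
apply: lerD.
- apply: le_trans (ler_norm_sum _ _ _) _; apply: ler_sum => i _.
  by rewrite normrM ger0_norm// -[leRHS]mulr1 ler_wpM2l.
- apply: le_trans (ler_norm_sum _ _ _) _.
  apply: (@le_trans _ _ (\sum_(i < k | ~~ bad i) w i * (m%:R * rho + d))).
    by apply: ler_sum => i gi; rewrite normrM ger0_norm// ler_wpM2l// g_good.
  rewrite -big_distrl /= -[leRHS]mul1r ler_wpM2r// addr_ge0// mulr_ge0//.
Qed.

End iterated_weighted_sum.

Lemma iint_discrete_prob (R : realType) (k : nat) (w a : nat -> R)
    (w_ge0 : forall i, 0 <= w i) (w_sum1 : \sum_(i < k) w i = 1)
    n (f : n.-tuple R -> R) : (forall t, 0 <= f t) ->
  iint (discrete_prob a w_ge0 w_sum1) (fun t => (f t)%:E) = (iwsum k w a f)%:E.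
Proof.
elim: n f => [|m IH] f f0 //=.
rewrite (eq_integral (fun x => (iwsum k w a (fun t => f [tuple of x :: t]))%:E));
  last by move=> x _; apply: IH => t.
rewrite (ge0_integral_discrete_prob _ _ w_sum1) => [|x].
  by rewrite -sumEFin; apply: eq_bigr => i _; rewrite EFinM.
by rewrite lee_fin (iwsum_ge0 _ w_ge0).
Qed.

Lemma indic_itv (R : realType) (T : Type) (A : set T) (x : T) :
  0 <= (\1_A x : R) <= 1.
Proof. by rewrite indicE; case: (x \in A); rewrite /= ?lexx ?ler01. Qed.

Lemma indicC_1B (R : realType) (T : Type) (A : set T) (x : T) :
  \1_(~` A) x = 1 - \1_A x :> R.
Proof. by rewrite !indicE in_setC; case: (x \in A); rewrite /= ?subr0 ?subrr. Qed.

Section risk_bounds.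
Context (R : realType) (s : R) (n p : nat) (X : 'M[R]_(n, p)).
Local Open Scope ereal_scope.

Lemma law_le_typeI beta betaZ (Peps Pe : probability R R) A :
  Dclass s Peps -> Dclass 1 Pe -> Dtilde Pe ->
  law X beta betaZ 0 Peps Pe A <= typeI s X A.
Proof. by move=> *; apply: ereal_sup_ubound; exists beta, betaZ, Peps, Pe. Qed.

Lemma law_le_typeII (tau b : R) beta betaZ (Peps Pe : probability R R) A :
  (tau <= `|b|)%R -> Dclass s Peps -> Dclass 1 Pe -> Dtilde Pe ->
  law X beta betaZ b Peps Pe (~` A) <= typeII s X tau A.
Proof. by move=> *; apply: ereal_sup_ubound; exists b, beta, betaZ, Peps, Pe. Qed.

End risk_bounds.

Section zero_design_coefficients.
Context (R : realType) (n p : nat) (X : 'M[R]_(n, p)).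

Definition response (b : R) (eps e : n.-tuple R) : n.-tuple R :=
  [tuple b * tnth e i + tnth eps i | i < n].

Lemma dataZ_zero e : dataZ X 0 e = e.
Proof. by apply: eq_from_tnth => i; rewrite tnth_mktuple mulmx0 mxE add0r. Qed.

Lemma dataY_zero b eps e : dataY X 0 0 b eps e = response b eps e.
Proof.
by apply: eq_from_tnth => i; rewrite !tnth_mktuple mulmx0 !mxE !add0r.
Qed.

Lemma law_zero_discrete (b : R) (A : set (n.-tuple R * n.-tuple R))
    (k : nat) (w a : nat -> R) (w_ge0 : forall i, 0 <= w i)
    (w_sum1 : \sum_(i < k) w i = 1)
    (l : nat) (v c : nat -> R) (v_ge0 : forall i, 0 <= v i)
    (v_sum1 : \sum_(i < l) v i = 1) :
  law X 0 0 b (discrete_prob a w_ge0 w_sum1) (discrete_prob c v_ge0 v_sum1) A =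
  (iwsum k w a (fun eps : n.-tuple R =>
     iwsum l v c (fun e : n.-tuple R => \1_A (e, response b eps e))))%:E.
Proof.
have indic_ge0 z : 0 <= (\1_A z : R) by case/andP: (indic_itv R A z).
rewrite /law -iint_discrete_prob => [|eps]; last exact: iwsum_ge0.
congr iint; apply/funext => eps; rewrite -iint_discrete_prob//.
by congr iint; apply/funext => e; rewrite dataZ_zero dataY_zero.
Qed.

End zero_design_coefficients.

Lemma powR_itv_ge1 (R : realType) (x s : R) : 1 <= x -> 1 <= s <= 2 ->
  x <= x `^ s <= x ^+ 2.
Proof.
move=> x1 /andP[s1 s2]; rewrite le1r_powR//= -powR_mulrn; last by lra.
exact: ler_powR.
Qed.

Lemma powR_itv_le1 (R : realType) (x s : R) : 0 < x <= 1 -> 1 <= s <= 2 ->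
  x ^+ 2 <= x `^ s <= x.
Proof.
move=> x01 /andP[s1 s2]; rewrite ge1r_powR// andbT -powR_mulrn; last first.
  by case/andP: x01 => ? ?; lra.
exact: ger_powR.
Qed.

Section lower_bound_construction.
Context (R : realType).

Definition e_weight (r : R) : nat -> R := nth 0 [:: 1 - r; r].
Definition e_atom (r : R) : nat -> R := nth 0 [:: 1; - ((1 - r) / r)].
Definition eps_weight (r : R) : nat -> R :=
  nth 0 [:: (1 - r) / 4; (1 - r) / 4; (1 - r) / 4; (1 - r) / 4; r].
Definition eps_atom0 : nat -> R := nth 0 [:: 1; -1; 3/2; -3/2; 0].
(* The rare atom [(1 - r) b / r] restores the zero mean after the shift. *)
Definition eps_atom1 (r b : R) : nat -> R :=
  nth 0 [:: 1 - b; -1 - b; 3/2 - b; -3/2 - b; (1 - r) * b / r].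

Variables (r b : R).
Hypothesis r_itv : 0 < r <= 1/10.

Let e_weight_ge0 i : 0 <= e_weight r i.
Proof.
rewrite /e_weight; case/andP: r_itv => ? ?.
by case: i => [|[|i]] /=; rewrite ?nth_nil; lra.
Qed.
Let e_weight_sum1 : \sum_(i < 2) e_weight r i = 1.
Proof. rewrite !big_ord_recr big_ord0 /= /e_weight /=; lra. Qed.
Let eps_weight_ge0 i : 0 <= eps_weight r i.
Proof.
rewrite /eps_weight; case/andP: r_itv => ? ?.
do 5 (case: i => [|i] /=; first lra).
by rewrite nth_nil.
Qed.
Let eps_weight_sum1 : \sum_(i < 5) eps_weight r i = 1.
Proof. rewrite !big_ord_recr big_ord0 /= /eps_weight /=; lra. Qed.

Definition Pe := discrete_prob (e_atom r) e_weight_ge0 e_weight_sum1.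
Definition Peps0 := discrete_prob eps_atom0 eps_weight_ge0 eps_weight_sum1.
Definition Peps1 := discrete_prob (eps_atom1 r b) eps_weight_ge0 eps_weight_sum1.

Lemma Pe_Dclass1 : Dclass 1 Pe.
Proof.
case/andP: r_itv => ? ?; apply: Dclass_discrete_prob.
- rewrite !big_ord_recr big_ord0 /= /e_weight /e_atom /=; field; lra.
- rewrite !big_ord_recr big_ord0 /= /e_weight /e_atom /= !powRr1//.
  rewrite normr1 normrN ger0_norm; last by apply: divr_ge0; lra.
  have -> : 0 + (1 - r) * 1 + r * ((1 - r) / r) = 2 * (1 - r) by field; lra.
  apply/andP; split; lra.
Qed.

Lemma Pe_Dtilde : Dtilde Pe.
Proof.
case/andP: r_itv => ? ?.
rewrite /Dtilde /Pe discrete_probE !big_ord_recr big_ord0 /= !diracE /e_atom /=.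
rewrite !mem_set /=; last 2 first.
- by rewrite normrN ger0_norm ?ltr_pdivlMr ?divr_ge0//; lra.
- by rewrite normr1; lra.
rewrite /e_weight /= !mule1 add0e -EFinD lte_fin; lra.
Qed.

Lemma Peps0_Dclass (t : R) : 0 <= t <= 1 -> Dclass (1 + t) Peps0.
Proof.
case/andP: r_itv => ? ? /andP[? ?]; apply: Dclass_discrete_prob.
- rewrite !big_ord_recr big_ord0 /= /eps_weight /eps_atom0 /=; lra.
- rewrite !big_ord_recr big_ord0 /= /eps_weight /eps_atom0 /= normr0 powR0;
    last by apply/eqP; lra.
  rewrite normr1 normrN1 powR1 (ger0_norm (x := 3/2)) ?(ler0_norm (x := -3/2));
    try lra.
  rewrite (_ : - (-3/2) = 3/2 :> R); last by lra.
  have /andP[? pow_ub] : 3/2 <= (3/2) `^ (1 + t) <= (3/2) ^+ 2.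
    by apply: powR_itv_ge1; [lra|apply/andP; split; lra].
  rewrite expr2 in pow_ub; apply/andP; split; nra.
Qed.

Lemma Peps1_Dclass (t : R) : 0 <= b <= 1/10 -> 0 <= t <= 1 ->
  r * ((1 - r) * b / r) `^ (1 + t) <= 1/10 -> Dclass (1 + t) Peps1.
Proof.
case/andP: r_itv => ? ? /andP[? ?] /andP[? ?] rare_moment.
have s_itv : 1 <= 1 + t <= 2 by apply/andP; split; lra.
apply: Dclass_discrete_prob.
- rewrite !big_ord_recr big_ord0 /= /eps_weight /eps_atom1 /=; field; lra.
rewrite !big_ord_recr big_ord0 /= /eps_weight /eps_atom1 /=.
rewrite (ger0_norm (x := 1 - b)) ?(ler0_norm (x := -1 - b)); try lra.
rewrite (ger0_norm (x := 3/2 - b)) ?(ler0_norm (x := -3/2 - b)); try lra.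
rewrite (ger0_norm (x := (1 - r) * b / r)); last by apply: divr_ge0; nra.
have b1_itv : 0 < 1 - b <= 1 by apply/andP; split; lra.
have /andP[q1 q2] := powR_itv_le1 b1_itv s_itv.
have /andP[q3 q4] := @powR_itv_ge1 R (- (-1 - b)) _ (ltac:(lra)) s_itv.
have /andP[q5 q6] := @powR_itv_ge1 R (3/2 - b) _ (ltac:(lra)) s_itv.
have /andP[q7 q8] := @powR_itv_ge1 R (- (-3/2 - b)) _ (ltac:(lra)) s_itv.
have := @powR_ge0 R ((1 - r) * b / r) (1 + t).
move: rare_moment; rewrite !expr2 in q1 q4 q6 q8.
set Q1 := (1 - b) `^ _ in q1 q2 *; set Q2 := (- (-1 - b)) `^ _ in q3 q4 *.
set Q3 := (3/2 - b) `^ _ in q5 q6 *; set Q4 := (- (-3/2 - b)) `^ _ in q7 q8 *.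
set Y := ((1 - r) * b / r) `^ _ => Y_le Y_ge0.
have Q_lb : 49/10 <= Q1 + Q2 + Q3 + Q4 by nra.
have Q_ub : Q1 + Q2 + Q3 + Q4 <= 71/10 by nra.
have -> : 0 + (1 - r) / 4 * Q1 + (1 - r) / 4 * Q2 + (1 - r) / 4 * Q3 +
  (1 - r) / 4 * Q4 + r * Y = (1 - r) / 4 * (Q1 + Q2 + Q3 + Q4) + r * Y by ring.
apply/andP; split; nra.
Qed.

Let e_weight_rare : \sum_(i < 2 | i == 1%N :> nat) e_weight r i = r.
Proof.
by rewrite big_mkcond /= !big_ord_recr big_ord0 /= /e_weight /= !add0r.
Qed.

Let eps_weight_rare : \sum_(i < 5 | i == 4%N :> nat) eps_weight r i = r.
Proof.
by rewrite big_mkcond /= !big_ord_recr big_ord0 /= /eps_weight /= !add0r.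
Qed.

Lemma response_agree n (J K : n.-tuple nat) :
  all (fun j => (j < 5)%N && (j != 4%N)) J ->
  all (fun j => (j < 2)%N && (j != 1%N)) K ->
  response 0 (map_tuple eps_atom0 J) (map_tuple (e_atom r) K) =
  response b (map_tuple (eps_atom1 r b) J) (map_tuple (e_atom r) K).
Proof.
move=> /all_tnthP goodJ /all_tnthP goodK; apply: eq_from_tnth => i.
rewrite !tnth_mktuple !tnth_map.
have -> : e_atom r (tnth K i) = 1.
  by case/andP: (goodK i); case: (tnth K i) => [|[|]].
have -> : eps_atom1 r b (tnth J i) = eps_atom0 (tnth J i) - b.
  by case/andP: (goodJ i); case: (tnth J i) => [|[|[|[|[|]]]]].
by rewrite mul0r add0r mulr1 addrC subrK.
Qed.

Lemma law_total_error_ge n p (X : 'M[R]_(n, p)) A :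
  ((1 - 2 * (n%:R * r))%:E <=
    law X 0 0 0 Peps0 Pe A + law X 0 0 b Peps1 Pe (~` A))%E.
Proof.
pose inner b' (eps : n.-tuple R) :=
  iwsum 2 (e_weight r) (e_atom r) (fun e => \1_A (e, response b' eps e)).
have inner_itv b' eps : 0 <= inner b' eps <= 1.
  by apply: iwsum_itv => // e; exact: indic_itv.
have innerC eps : iwsum 2 (e_weight r) (e_atom r)
    (fun e => \1_(~` A) (e, response b eps e)) = 1 - inner b eps.
  by rewrite -iwsum_1B//; congr iwsum; apply/funext => e; rewrite indicC_1B.
have inner_close (J : n.-tuple nat) :
    all (fun j => (j < 5)%N && (j != 4%N)) J ->
    `|inner 0 (map_tuple eps_atom0 J) - inner b (map_tuple (eps_atom1 r b) J)|
      <= n%:R * r.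
  move=> goodJ; rewrite /inner -[leRHS]addr0 -[in leRHS]e_weight_rare.
  apply: (iwsum_coupling e_weight_ge0 e_weight_sum1 (bad := fun j => j == 1%N))
    => // [e|e|K goodK]; try exact: indic_itv.
  by rewrite response_agree// subrr normr0.
have nr_ge0 : 0 <= n%:R * r.
  by case/andP: r_itv => ? ?; rewrite mulr_ge0// ltW.
have := iwsum_coupling eps_weight_ge0 eps_weight_sum1 (bad := fun j => j == 4%N)
  nr_ge0 (inner_itv 0) (inner_itv b) inner_close.
rewrite eps_weight_rare !law_zero_discrete -EFinD lee_fin.
under [X in _ + iwsum _ _ _ X]eq_fun do rewrite innerC.
rewrite iwsum_1B// ler_norml => /andP[close _]; lra.
Qed.

End lower_bound_construction.

Lemma powR_le1 (R : realType) (x s : R) : 0 <= x <= 1 -> 0 <= s -> x `^ s <= 1.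
Proof.
move=> /andP[x_ge0 x_le1] s_ge0; have [->|x_neq0] := eqVneq x 0.
  by have [->|s_neq0] := eqVneq s 0; rewrite ?powRr0 ?powR0.
by rewrite -(powRr0 x) ger_powR// x_le1 andbT lt_neqAle eq_sym x_neq0 x_ge0.
Qed.

Lemma natr_powR_le1 (R : realType) (n : nat) (x : R) :
  x <= 0 -> n%:R `^ x <= 1.
Proof.
move=> x_le0; have [->|n_gt0] := posnP n.
  by have [->|x_neq0] := eqVneq x 0; rewrite ?powRr0 ?powR0.
by rewrite -[leRHS](powRr0 n%:R); apply: ler_powR; rewrite ?ler1n.
Qed.

Lemma rare_moment_le (R : realType) (r b t : R) :
  0 < r <= 1 -> 0 <= b -> 0 <= t ->
  r * ((1 - r) * b / r) `^ (1 + t) <= b * (b / r) `^ t.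
Proof.
move=> /andP[r_gt0 r_le1] b_ge0 t_ge0.
have u_ge0 : 0 <= b / r by rewrite divr_ge0// ltW.
apply: (@le_trans _ _ (r * (b / r) `^ (1 + t))).
  apply: ler_wpM2l; first exact: ltW.
  apply: ge0_ler_powR; rewrite ?nnegrE//; first lra.
  - by rewrite -mulrA mulr_ge0//; lra.
  - by rewrite -mulrA ler_piMl//; lra.
rewrite powRD ?powRr1//; last by rewrite gt_eqF//; lra.
by rewrite mulrA mulrCA divff ?mulr1// gt_eqF.
Qed.

(* With [N = n ^ (- t/(1+t))] one has [N * (N n) ^ t = n ^ 0 = 1]: the
   exponent of the rate is the one that makes this cancellation exact. *)
Lemma rate_factor_le1 (R : realType) (t : R) (n : nat) : 0 <= t ->
  n%:R `^ (- (t / (1 + t))) *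
    (n%:R `^ (- (t / (1 + t))) * n.+1%:R / 2) `^ t <= 1.
Proof.
move=> t_ge0; set a := t / (1 + t); set N := n%:R `^ (- a).
have N_ge0 : 0 <= N by exact: powR_ge0.
have [n0|n_gt0] := posnP n.
  have N_le1 : N <= 1 by rewrite natr_powR_le1// oppr_le0 divr_ge0//; lra.
  rewrite n0 mulr_ile1// ?powR_ge0// powR_le1//.
  by rewrite divr_ge0 ?mulr_ge0//= ler_pdivrMr//; lra.
have n_neq0 : n%:R != 0 :> R by rewrite pnatr_eq0 -lt0n.
have n_ge1 : 1 <= n%:R :> R by rewrite ler1n.
apply: (@le_trans _ _ (N * (N * n%:R) `^ t)).
  apply: ler_wpM2l => //; apply: ge0_ler_powR; rewrite ?nnegrE ?mulr_ge0//.
  rewrite -mulrA; apply: ler_wpM2l => //.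
  by rewrite -natr1 ler_pdivrMr//; lra.
have -> : N * n%:R = n%:R `^ (1 - a).
  by rewrite powRB ?n_neq0 ?implybT// powRr1 ?ler0n// /N powRN mulrC.
rewrite -powRrM /N -powRD ?n_neq0 ?implybT//.
by rewrite (_ : - a + (1 - a) * t = 0) ?powRr0// /a; field; lra.
Qed.

Lemma rate_parameters (R : realType) (t eta : R) (n : nat) :
  0 <= t <= 1 -> 0 < eta < 1 ->
  let b := eta / 40 * n%:R `^ (- (t / (1 + t))) in
  let r := eta / (20 * n.+1%:R) in
  [/\ 0 < r <= 1/10, 0 <= b <= 1/10,
      r * ((1 - r) * b / r) `^ (1 + t) <= 1/10 & 2 * (n%:R * r) <= eta].
Proof.
move=> /andP[t_ge0 t_le1] /andP[eta_gt0 eta_lt1] b r.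
have n1_ge1 : 1 <= n.+1%:R :> R by rewrite ler1n.
have N_le1 : n%:R `^ (- (t / (1 + t))) <= 1 :> R.
  by rewrite natr_powR_le1// oppr_le0 divr_ge0//; lra.
have r_itv : 0 < r <= 1/10.
  by rewrite divr_gt0 ?mulr_gt0//= ler_pdivrMr ?mulr_gt0//; nra.
have b_le : b <= eta / 40.
  by rewrite -[leRHS]mulr1; apply: ler_wpM2l; rewrite // divr_ge0// ltW.
have b_ge0 : 0 <= b by rewrite mulr_ge0 ?powR_ge0// divr_ge0// ltW.
split => //; first by rewrite b_ge0 /=; lra.
- have r_itv1 : 0 < r <= 1 by case/andP: r_itv => ? ?; apply/andP; split; lra.
  apply: le_trans (rare_moment_le r_itv1 b_ge0 t_ge0) _.
  have -> : b / r = n%:R `^ (- (t / (1 + t))) * n.+1%:R / 2.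
    by rewrite /b /r; field; apply/andP; split; lra.
  rewrite /b -mulrA; apply: (@le_trans _ _ (eta / 40 * 1)).
    by apply: ler_wpM2l; [rewrite divr_ge0// ltW|exact: rate_factor_le1].
  lra.
- have n_le : n%:R <= n.+1%:R :> R by rewrite ler_nat.
  rewrite /r (_ : 2 * _ = eta * n%:R / (10 * n.+1%:R)); last first.
    by field; rewrite addrC natr1 pnatr_eq0.
  by rewrite ler_pdivrMr ?mulr_gt0//; nra.
Qed.

Theorem theorem4 (R : realType) (t : R) (ht : 0 <= t <= 1) :
  forall eta : R, 0 < eta < 1 ->
  exists c : R, 0 < c /\
    forall (n p : nat) (X : 'M[R]_(n, p)),
      ((1 - eta)%:E <=
        minimax_risk (1 + t) X (c * (n%:R `^ (- (t / (1 + t))))))%E.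
Proof.
move=> eta eta_itv; exists (eta / 40); split.
  by case/andP: eta_itv => eta_gt0 _; rewrite divr_gt0.
move=> n p X.
have [r_itv b_itv rare_moment error_le] := rate_parameters n ht eta_itv.
set b := eta / 40 * _ in b_itv rare_moment *.
set r := eta / _ in r_itv rare_moment error_le.
apply: le_ereal_inf_tmp => _ [A _ <-].
have typeI_ge := law_le_typeI X 0 0 A
  (Peps0_Dclass r_itv ht) (Pe_Dclass1 r_itv) (Pe_Dtilde r_itv).
have typeII_ge := law_le_typeII X 0 0 A (ler_norm b)
  (Peps1_Dclass r_itv b_itv ht rare_moment) (Pe_Dclass1 r_itv) (Pe_Dtilde r_itv).
apply: le_trans (leeD typeI_ge typeII_ge).
apply: le_trans _ (law_total_error_ge b r_itv X A).
by rewrite lee_fin lerD2l lerN2.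
Qed.
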